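(* Let $k\ge 3$ be an integer. Let $T$ be a $(k-1)^+$-branching tree in which exactly one vertex $y$ has degree $k-1$ (so every other internal vertex has degree at least $k$), and suppose $y$ has a neighbour $z$ that is not a leaf. Let $T'$ be the tree obtained from $T$ by contracting the edge $yz$, i.e., deleting $y$ and adding an edge $zx$ for every neighbour $x\ne z$ of $y$. Then $T'$ is $k^+$-branching and $b^{\{y\}}(T)\le b(T')$.
   Context: In a tree, vertices of degree $1$ are leaves and all other vertices are internal vertices; a tree is $m^+$-branching if every internal vertex has degree at least $m$. Graph burning on a graph $G$: in each round $i=1,2,\dots$ a vertex $b_i$ (a source, possibly already burned) is chosen and burned, and simultaneously every unburned neighbour of a vertex burned by the end of round $i-1$ becomes burned; burned vertices stay burned. A sequence $(b_1,\dots,b_m)$ is a burning sequence if all vertices are burned after round $m$; the burning number $b(G)$ is the minimum length of a burning sequence. Modified burning: for $U\subseteq V(G)$ and vertices $x_1,\dots,x_m$, the sequence $(U\cup\{x_1\},x_2,\dots,x_m)$ burns all vertices of $U\cup\{x_1\}$ in round $1$ and proceeds as in ordinary burning in rounds $i\ge 2$ (burning $x_i$ and spreading); it is a modified burning sequence if all vertices are burned after round $m$. $b^{U}(G)$ is the minimum length $m$ of a modified burning sequence for $G$ with the given set $U$. *)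

From mathcomp Require Import all_boot.
Set Implicit Arguments. Unset Strict Implicit. Unset Printing Implicit Defensive.

Section Graphs.
Variable V : finType.
Implicit Types (e : rel V).

Definition simple_graph e := symmetric e /\ irreflexive e.

Definition is_tree e :=
  (forall u v : V, connect e u v) /\
  ~ (exists c : seq V, [/\ uniq c, 3 <= size c & cycle e c]).

Definition deg e (v : V) : nat := #|[set u | e v u]|.

Definition is_leaf e v := deg e v == 1.
Definition is_internal e v := deg e v != 1.

Definition branching (m : nat) e := forall v, is_internal e v -> m <= deg e v.

Definition nbhd e (B : {set V}) : {set V} := [set u | [exists v in B, e v u]].

Definition burn_step e (B : {set V}) (x : V) : {set V} := x |: (B :|: nbhd e B).

Definition burn_from e (B0 : {set V}) (xs : seq V) : {set V} :=
  foldl (burn_step e) B0 xs.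

Definition is_burning_seq e (s : seq V) := burn_from e set0 s = [set: V].

(* (U ∪ {x_1}, x_2, ..., x_m) is a modified burning sequence; xs = [x_2;...;x_m],
   its length is (size xs).+1 *)
Definition is_mod_burning_seq e (U : {set V}) (x1 : V) (xs : seq V) :=
  burn_from e (x1 |: U) xs = [set: V].

End Graphs.

Definition contract (V : finType) (e : rel V) (y z : V) : rel {v : V | v != y} :=
  fun u v => (val u != val v) &&
    [|| e (val u) (val v), (val u == z) && e y (val v) | (val v == z) && e y (val u)].
Arguments contract {V} e y z.

(* Contracting yz changes no degree except that of z: a tree has no triangles,
   so a neighbour of y other than z was not already adjacent to z.  The new
   degree of z is (deg z - 1) + (k - 2), and deg z >= k because it is at least
   k - 1 and differs from k - 1; hence T' is k^+-branching when k >= 3.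
   For burning, start T from {y, x_1} and then follow x_2, ..., x_m, a burning
   sequence of T'.  Round by round, the burned set of T contains y and every
   vertex burned in T': an edge zx created by the contraction is replaced by the
   path z - y - x whose middle vertex is burned from the start. *)

From mathcomp Require Import all_boot zify.

Set Implicit Arguments. Unset Strict Implicit. Unset Printing Implicit Defensive.

Section SimpleGraph.
Variables (V : finType) (e : rel V).
Hypothesis sg : simple_graph e.

Lemma sg_irr a : e a a = false.
Proof. by case: sg => _; apply. Qed.

Lemma sg_sym a b : e a b = e b a.
Proof. by case: sg => + _; apply. Qed.

Lemma sg_neq a b : e a b -> a != b.
Proof. by apply: contraTneq => ->; rewrite sg_irr. Qed.

Lemma card_nbhdD1 a b : e a b -> #|[set w | e a w] :\ b| = (deg e a).-1.
Proof. by move=> eab; rewrite /deg (cardsD1 b [set w | e a w]) inE eab. Qed.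

Definition triangle_free := forall a b c, e a b -> e b c -> ~~ e c a.

Lemma tree_triangle_free : is_tree e -> triangle_free.
Proof.
case=> _ acyclic a b c eab ebc; apply/negP => eca; apply: acyclic.
exists [:: a; b; c]; split=> //=; last by rewrite eab ebc eca.
rewrite !inE !negb_or andbT -!(eq_sym c) -andbA.
by apply/and3P; split; apply/eqP => eq; move: eab ebc eca; rewrite eq sg_irr => *.
Qed.

End SimpleGraph.

Section Burning.
Variables (V : finType) (e : rel V).

Lemma nbhd0 : nbhd e set0 = set0.
Proof. by apply/setP => u; rewrite !inE; apply/existsP => -[v]; rewrite inE. Qed.

Lemma burn_step0 x : burn_step e set0 x = [set x].
Proof. by rewrite /burn_step nbhd0 !setU0. Qed.

Lemma burn_step_subset (B : {set V}) x : B \subset burn_step e B x.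
Proof. by apply/subsetP => u uB; rewrite !inE uB orbT. Qed.

Lemma burn_from_subset (B : {set V}) xs : B \subset burn_from e B xs.
Proof.
elim: xs B => [|x xs IH] B /=; first exact: subxx.
exact: subset_trans (burn_step_subset B x) (IH _).
Qed.

End Burning.

Section Contraction.
Variables (V : finType) (e : rel V) (y z : V).
Hypotheses (sg : simple_graph e) (tf : triangle_free e) (eyz : e y z).

Local Notation e' := (contract e y z).

Definition contract_nbhd (v : V) : {set V} :=
  [set w | [&& w != y, v != w & [|| e v w, (v == z) && e y w | (w == z) && e y v]]].

Lemma deg_contract (v' : {v : V | v != y}) : deg e' v' = #|contract_nbhd (val v')|.
Proof.
rewrite /deg -(card_imset [set u | e' v' u] val_inj); apply: eq_card => w.
rewrite inE; apply/imsetP/idP => [[u' + ->] | /andP[wy adj]].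
  by rewrite inE (valP u').
by exists (exist _ w wy); rewrite // inE.
Qed.

Lemma z_neq_y : z != y.
Proof. by rewrite eq_sym (sg_neq sg eyz). Qed.

Lemma contract_nbhd_other v : v != z ->
  contract_nbhd v = if e y v then z |: ([set w | e v w] :\ y) else [set w | e v w].
Proof.
move=> vz; apply/setP => w; rewrite !inE (negbTE vz) /=.
have [eyv|neyv] := boolP (e y v); rewrite !inE ?andbT ?andbF ?orbF.
  have [->|_] := eqVneq w z; first by rewrite z_neq_y vz !orbT.
  by rewrite orbF; case evw: (e v w); rewrite ?andbF // (sg_neq sg evw).
case evw: (e v w); rewrite ?andbF // (sg_neq sg evw) !andbT.
by apply: contraNneq neyv => wy; rewrite -wy (sg_sym sg).
Qed.

Lemma deg_contract_other (v' : {v : V | v != y}) :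
  val v' != z -> deg e' v' = deg e (val v').
Proof.
move=> vz; rewrite deg_contract contract_nbhd_other //; case: ifP => // eyv.
have nevz : ~~ e (val v') z by apply: (tf _ eyv); rewrite (sg_sym sg).
rewrite cardsU1 !inE (negbTE nevz) andbF card_nbhdD1 1?(sg_sym sg) //.
by rewrite add1n prednK //; apply/card_gt0P; exists y; rewrite inE (sg_sym sg).
Qed.

Lemma contract_nbhd_z :
  contract_nbhd z = ([set w | e z w] :\ y) :|: ([set w | e y w] :\ z).
Proof.
apply/setP => w; rewrite !inE eqxx eyz andbT /=.
have [->|_] := eqVneq w z; first by rewrite (sg_irr sg); case: (z != y).
case eyw: (e y w); rewrite ?orbF ?orbT ?andbT //.
by rewrite eq_sym (sg_neq sg eyw).
Qed.

Lemma deg_contract_z (z' : {v : V | v != y}) :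
  val z' = z -> deg e' z' = (deg e z).-1 + (deg e y).-1.
Proof.
move=> z'z; have ezy : e z y by rewrite (sg_sym sg).
have disj : ([set w | e z w] :\ y) :&: ([set w | e y w] :\ z) = set0.
  apply/setP => w; rewrite !inE; apply/negP => /andP[/andP[_ ezw] /andP[_ eyw]].
  by move: (tf eyz ezw); rewrite (sg_sym sg w) eyw.
by rewrite deg_contract z'z contract_nbhd_z cardsU disj cards0 subn0 !card_nbhdD1.
Qed.

Lemma contract_branching k :
  3 <= k -> branching k.-1 e -> deg e y = k.-1 ->
  (forall v, v != y -> deg e v != k.-1) -> is_internal e z ->
  branching k e'.
Proof.
move=> k3 br degy deg_ne intz v' int'.
have ge_k v : v != y -> is_internal e v -> k <= deg e v.
  by move=> vy /br; have := deg_ne v vy; lia.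
have [v'z|v'z] := eqVneq (val v') z.
  by rewrite deg_contract_z // degy; have := ge_k z z_neq_y intz; lia.
rewrite deg_contract_other //; apply: ge_k (valP v') _.
by move: int'; rewrite /is_internal deg_contract_other.
Qed.

Lemma burn_step_contract (B' : {set {v : V | v != y}}) (B : {set V}) x' :
  y \in B -> val @: B' \subset B ->
  val @: burn_step e' B' x' \subset burn_step e B (val x').
Proof.
move=> yB /subsetP B'B; apply/subsetP => _ /imsetP[u' + ->].
rewrite /burn_step /nbhd !inE => /or3P[/eqP -> | u'B | /existsP[v' /andP[v'B adj]]].
- by rewrite eqxx.
- by rewrite B'B ?orbT // imset_f.
- apply/orP; right; apply/orP; right; apply/existsP.
  case/andP: adj => _ /or3P[evu | /andP[/eqP vz eyu] | /andP[/eqP uz eyv]].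
  + by exists (val v'); rewrite B'B ?imset_f.
  + by exists y; rewrite yB.
  + by exists y; rewrite yB uz.
Qed.

Lemma burn_from_contract (B' : {set {v : V | v != y}}) (B : {set V}) xs' :
  y \in B -> val @: B' \subset B ->
  val @: burn_from e' B' xs' \subset burn_from e B (map val xs').
Proof.
elim: xs' B' B => [|x' xs' IH] B' B yB B'B //=.
apply: IH; last exact: burn_step_contract.
exact: subsetP (burn_step_subset e B (val x')) _ yB.
Qed.

Lemma contract_mod_burning_seq x' xs' :
  is_burning_seq e' (x' :: xs') -> is_mod_burning_seq e [set y] (val x') (map val xs').
Proof.
rewrite /is_burning_seq /is_mod_burning_seq /= burn_step0 => burnt.
have yB : y \in val x' |: [set y] by rewrite !inE eqxx orbT.
apply/eqP; rewrite eqEsubset subsetT; apply/subsetP => w _.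
have [->|wy] := eqVneq w y; first exact: subsetP (burn_from_subset _ _ _) _ yB.
have : val @: burn_from e' [set x'] xs' \subset burn_from e (val x' |: [set y]) (map val xs').
  by apply: burn_from_contract; rewrite // imset_set1 sub1set !inE eqxx.
by rewrite burnt => /subsetP; apply; apply/imsetP; exists (exist _ w wy).
Qed.

End Contraction.

Theorem mainTheorem4 (V : finType) (e : rel V) (k : nat) (y z : V) :
  3 <= k ->
  simple_graph e -> is_tree e ->
  branching k.-1 e ->
  deg e y = k.-1 ->
  (forall v, v != y -> deg e v != k.-1) ->
  e y z -> is_internal e z ->
  branching k (contract e y z) /\
  (forall s' : seq {v : V | v != y}, is_burning_seq (contract e y z) s' ->
     exists (x1 : V) (xs : seq V),
       is_mod_burning_seq e [set y] x1 xs /\ (size xs).+1 <= size s').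
Proof.
move=> k3 sg tree br degy deg_ne eyz intz.
have tf := tree_triangle_free sg tree.
split; first exact: (contract_branching sg tf eyz k3 br degy deg_ne intz).
case=> [|x' xs'] burnt.
  by move/setP/(_ (exist _ z (z_neq_y sg eyz))): burnt; rewrite !inE.
exists (val x'), (map val xs'); split; last by rewrite size_map.
exact: (contract_mod_burning_seq eyz burnt).
Qed.
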